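(* Every perinormal domain is weakly normal (and hence seminormal).
   Context: All rings are commutative with identity; ''local'' means having a unique maximal ideal; an overring of a domain $R$ is a ring between $R$ and its fraction field. A ring extension $A \subseteq B$ satisfies going-down if whenever $\mathfrak{p} \subset \mathfrak{q}$ are primes of $A$ and $Q$ is a prime of $B$ with $Q \cap A = \mathfrak{q}$, there is a prime $P \subseteq Q$ of $B$ with $P \cap A = \mathfrak{p}$. A domain $R$ is perinormal if every local overring $S$ of $R$ such that $R \subseteq S$ satisfies going-down is a localization of $R$. A domain $R$ is weakly normal if for every integral overring $S$ of $R$ such that $\operatorname{Spec} S \to \operatorname{Spec} R$ is a bijection and, for every $P \in \operatorname{Spec} S$ with $\mathfrak{p} = P \cap R$, the residue field extension $R_{\mathfrak{p}}/\mathfrak{p}R_{\mathfrak{p}} \to S_P/PS_P$ is purely inseparable, one has $S = R$. A domain $R$ is seminormal if whenever $x$ in its fraction field satisfies $x^2, x^3 \in R$, then $x \in R$. *)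

(* Commutative algebra of a domain R, realized as a subring
   of its fraction field K; overrings, ideals, primes are predicates on K. *)
From mathcomp Require Import all_boot all_algebra.
Set Implicit Arguments. Unset Strict Implicit. Unset Printing Implicit Defensive.
Import GRing.Theory.
Local Open Scope ring_scope.

Section CommAlg.
Variable K : fieldType.
Implicit Types (A B I J P Q U : K -> Prop).

Definition is_subring A : Prop :=
  A 1 /\ (forall x y, A x -> A y -> A (x - y)) /\ (forall x y, A x -> A y -> A (x * y)).

Definition is_frac_field A : Prop :=
  forall x : K, exists a b, A a /\ A b /\ b != 0 /\ x = a / b.

Definition overring A B : Prop := is_subring B /\ (forall x, A x -> B x).

Definition set_eq A B : Prop := forall x, A x <-> B x.

Definition is_ideal A I : Prop :=
  (forall x, I x -> A x) /\ I 0 /\ (forall x y, I x -> I y -> I (x - y)) /\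
  (forall a x, A a -> I x -> I (a * x)).

Definition prime_ideal A P : Prop :=
  is_ideal A P /\ ~ P 1 /\ (forall a b, A a -> A b -> P (a * b) -> P a \/ P b).

Definition maximal_ideal A M : Prop :=
  is_ideal A M /\ ~ M 1 /\
  (forall J, is_ideal A J -> (forall x, M x -> J x) -> set_eq J M \/ J 1).

Definition local_ring A : Prop :=
  exists M, maximal_ideal A M /\ (forall N, maximal_ideal A N -> set_eq N M).

Definition contr A P : K -> Prop := fun x => P x /\ A x.

Definition mult_set A U : Prop :=
  (forall u, U u -> A u) /\ U 1 /\ ~ U 0 /\ (forall u v, U u -> U v -> U (u * v)).

Definition localization A U : K -> Prop :=
  fun x => exists a u, A a /\ U u /\ x = a / u.

Definition is_localization_of A B : Prop :=
  exists U, mult_set A U /\ set_eq B (localization A U).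

Definition loc_at A P : K -> Prop := localization A (fun u => A u /\ ~ P u).
Definition ext_loc_at A P : K -> Prop :=
  fun x => exists a u, P a /\ (A u /\ ~ P u) /\ x = a / u.

Definition going_down A B : Prop :=
  forall p q Q, prime_ideal A p -> prime_ideal A q -> (forall x, p x -> q x) ->
    prime_ideal B Q -> set_eq (contr A Q) q ->
    exists P, prime_ideal B P /\ (forall x, P x -> Q x) /\ set_eq (contr A P) p.

Definition perinormal R : Prop :=
  forall S, overring R S -> local_ring S -> going_down R S -> is_localization_of R S.

Definition integral_over A B : Prop :=
  forall s, B s -> exists f : {poly K},
    f \is monic /\ (forall i, A f`_i) /\ root f s.

Definition spec_bijective A B : Prop :=
  (forall p, prime_ideal A p -> exists P, prime_ideal B P /\ set_eq (contr A P) p) /\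
  (forall P1 P2, prime_ideal B P1 -> prime_ideal B P2 ->
     set_eq (contr A P1) (contr A P2) -> set_eq P1 P2).

(* The residue field extension A_p/pA_p -> B_P/PB_P (p = P ∩ A) is purely
   inseparable: every y of B_P/PB_P has a power y^k, k = 1 or k a power of the
   characteristic p0 of the residue field (p0%:R ∈ P), lying in A_p/pA_p. *)
Definition residue_purely_insep A B P : Prop :=
  forall y, loc_at B P y -> exists (k : nat) (r : K),
    (k = 1%N \/ exists p0 n, prime p0 /\ P p0%:R /\ k = (p0 ^ n)%N) /\
    loc_at A (contr A P) r /\ ext_loc_at B P (y ^+ k - r).

Definition weakly_normal R : Prop :=
  forall S, overring R S -> integral_over R S -> spec_bijective R S ->
    (forall P, prime_ideal S P -> residue_purely_insep R S P) ->
    set_eq S R.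

Definition seminormal R : Prop :=
  forall x : K, R (x ^+ 2) -> R (x ^+ 3) -> R x.

End CommAlg.

From mathcomp Require Import all_boot all_algebra.
From mathcomp Require classical_sets boolp.
From mathcomp Require Import ring.
From Stdlib Require Import Classical.
Set Implicit Arguments. Unset Strict Implicit. Unset Printing Implicit Defensive.
Import GRing.Theory.
Local Open Scope ring_scope.

(* Let S be an integral overring of R with Spec S -> Spec R bijective, and suppose
   x is in S but not in R.  Take a maximal ideal m of R containing the conductor
   {r | r x in R} and the prime Q of S over m.  Going up for the integral extension
   R -> S together with injectivity on spectra shows that the local ring S_Q has
   going down over R, so by perinormality S_Q = U^-1 R.  Writing x = a / u with
   u in U, u is a unit of S_Q, hence u is not in Q, so not in m; yet u x = a is in
   R, so u lies in the conductor.  For seminormality apply this to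
   S = R + R x when x^2 and x^3 are in R: S is integral over R and its primes are
   determined by their contractions. *)

Section Perinormal.
Variable K : fieldType.
Implicit Types (A B I J P Q R S U : K -> Prop).

Lemma subring1 A : is_subring A -> A 1.
Proof. by case. Qed.

Lemma subringB A x y : is_subring A -> A x -> A y -> A (x - y).
Proof. by case=> _ [hB _]; apply: hB. Qed.

Lemma subringM A x y : is_subring A -> A x -> A y -> A (x * y).
Proof. by case=> _ [_ hM]; apply: hM. Qed.

Lemma subring0 A : is_subring A -> A 0.
Proof. by move=> hA; rewrite -(subrr 1); apply: subringB (subring1 hA) (subring1 hA). Qed.

Lemma subringN A x : is_subring A -> A x -> A (- x).
Proof. by move=> hA hx; rewrite -sub0r; apply: subringB hA (subring0 hA) hx. Qed.

Lemma subringD A x y : is_subring A -> A x -> A y -> A (x + y).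
Proof. by move=> hA hx hy; rewrite -[y]opprK; apply: subringB hA hx (subringN hA hy). Qed.

Lemma subringX A x n : is_subring A -> A x -> A (x ^+ n).
Proof.
move=> hA hx; elim: n => [|n IH]; first by rewrite expr0; apply: subring1.
by rewrite exprS; apply: subringM.
Qed.

Lemma subring_sum A n (F : 'I_n -> K) : is_subring A ->
  (forall i, A (F i)) -> A (\sum_(i < n) F i).
Proof.
move=> hA hF; apply: (big_ind A) => //; first exact: subring0 hA.
by move=> x y; apply: subringD hA.
Qed.

Ltac subring_closure hA :=
  repeat first [ assumption | exact: (subring0 hA) | exact: (subring1 hA)
               | apply: (subringD hA) | apply: (subringB hA) | apply: (subringM hA)
               | apply: (subringN hA) | apply: (subringX _ hA) ].

Lemma ideal_sub A I x : is_ideal A I -> I x -> A x.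
Proof. by case=> hsub _; apply: hsub. Qed.

Lemma ideal0 A I : is_ideal A I -> I 0.
Proof. by case=> _ []. Qed.

Lemma idealB A I x y : is_ideal A I -> I x -> I y -> I (x - y).
Proof. by case=> _ [_ [hB _]]; apply: hB. Qed.

Lemma idealMl A I a x : is_ideal A I -> A a -> I x -> I (a * x).
Proof. by case=> _ [_ [_ hM]]; apply: hM. Qed.

Lemma idealMr A I a x : is_ideal A I -> A a -> I x -> I (x * a).
Proof. by rewrite mulrC; apply: idealMl. Qed.

Lemma idealN A I x : is_ideal A I -> I x -> I (- x).
Proof. by move=> hI hx; rewrite -sub0r; apply: idealB hI (ideal0 hI) hx. Qed.

Lemma idealD A I x y : is_ideal A I -> I x -> I y -> I (x + y).
Proof. by move=> hI hx hy; rewrite -[y]opprK; apply: idealB hI hx (idealN hI hy). Qed.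

Lemma ideal_sum A I n (F : 'I_n -> K) : is_ideal A I ->
  (forall i, I (F i)) -> I (\sum_(i < n) F i).
Proof.
move=> hI hF; apply: (big_ind I) => //; first exact: ideal0 hI.
by move=> x y; apply: idealD hI.
Qed.

Lemma idealXB A I a b n : is_subring A -> is_ideal A I -> A a -> A b ->
  I (a - b) -> I (a ^+ n - b ^+ n).
Proof.
move=> hA hI ha hb hab; elim: n => [|n IH]; first by rewrite subrr; apply: ideal0 hI.
have -> : a ^+ n.+1 - b ^+ n.+1 = a * (a ^+ n - b ^+ n) + b ^+ n * (a - b).
  by rewrite !exprS; ring.
by apply: idealD hI (idealMl hI ha IH) (idealMl hI (subringX _ hA hb) hab).
Qed.

Lemma prime_ideal_neq0 A P u : prime_ideal A P -> ~ P u -> u != 0.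
Proof. by move=> [hP _] nu; apply/eqP => u0; apply: nu; rewrite u0; apply: ideal0 hP. Qed.

Lemma prime_ideal_mul_notin A P u v : prime_ideal A P -> A u -> A v ->
  ~ P u -> ~ P v -> ~ P (u * v).
Proof. by case=> _ [_ hp] hu hv nu nv /(hp _ _ hu hv) []. Qed.

Lemma prime_idealX A P x n : is_subring A -> prime_ideal A P -> A x -> P (x ^+ n) -> P x.
Proof.
move=> hA [_ [hP1 hp]] hx; elim: n => [|n IH]; first by rewrite expr0.
by rewrite exprS => /(hp _ _ hx (subringX _ hA hx)) [].
Qed.

Lemma prime_ideal_contr A B P : is_subring B -> (forall x, B x -> A x) ->
  prime_ideal A P -> prime_ideal B (contr B P).
Proof.
move=> hB hBA [hPI [hP1 hp]]; split; last split.
- split; last split; last split.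
  + by move=> x [].
  + by split; [apply: ideal0 hPI | apply: subring0 hB].
  + move=> x y [hx hxB] [hy hyB].
    by split; [apply: idealB hPI hx hy | apply: subringB hB hxB hyB].
  + move=> b x hb [hx hxB]; split; last exact: subringM hB hb hxB.
    by apply: idealMl hPI (hBA _ hb) hx.
- by case.
- by move=> a b ha hb [/(hp _ _ (hBA _ ha) (hBA _ hb)) [] hab _]; [left|right].
Qed.

Definition ideal_avoiding A J U X : Prop :=
  is_ideal A X /\ (forall y, J y -> X y) /\ (forall u, U u -> ~ X u).

Definition max_ideal_avoiding A J U Q : Prop :=
  ideal_avoiding A J U Q /\
  (forall X, ideal_avoiding A J U X -> (forall y, Q y -> X y) -> forall y, X y -> Q y).

Lemma ideal_avoiding_chain_union A J U (C : (K -> Prop) -> Prop) :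
  is_ideal A J -> (forall u, U u -> ~ J u) ->
  (forall X, C X -> ideal_avoiding A J U X) ->
  (forall X Y, C X -> C Y -> (forall y, X y -> Y y) \/ (forall y, Y y -> X y)) ->
  ideal_avoiding A J U (fun y => J y \/ exists X, C X /\ X y).
Proof.
move=> hJ hJU hC htot.
have inX X y : C X -> J y -> X y by move=> /hC [_ [hJX _]]; apply: hJX.
split; [|split; [by move=> y hy; left|]].
- split; last split; last split.
  + move=> y [/(ideal_sub hJ) // | [X [/hC [hX _] hy]]]; exact: ideal_sub hX hy.
  + by left; apply: ideal0 hJ.
  + move=> y z [hy | [X [CX hy]]] [hz | [Y [CY hz]]].
    * by left; apply: idealB hJ hy hz.
    * by right; exists Y; split => //; apply: idealB (hC _ CY).1 (inX _ _ CY hy) hz.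
    * by right; exists X; split => //; apply: idealB (hC _ CX).1 hy (inX _ _ CX hz).
    * case: (htot _ _ CX CY) => hXY; [right; exists Y | right; exists X]; split => //.
      - by apply: idealB (hC _ CY).1 (hXY _ hy) hz.
      - by apply: idealB (hC _ CX).1 hy (hXY _ hz).
  + move=> a y ha [hy | [X [CX hy]]]; first by left; apply: idealMl hJ ha hy.
    by right; exists X; split => //; apply: idealMl (hC _ CX).1 ha hy.
- move=> u hu hUu; case: hUu => [hy | [X [/hC [_ [_ hXU]] hy]]].
  + exact: hJU hu hy.
  + exact: hXU hu hy.
Qed.

Lemma exists_max_ideal_avoiding A J U : is_ideal A J -> (forall u, U u -> ~ J u) ->
  exists Q, max_ideal_avoiding A J U Q.
Proof.
move=> hJ hJU.
pose T := {X : K -> Prop | ideal_avoiding A J U X}.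
pose le (s t : T) := boolp.asbool (forall y, sval s y -> sval t y).
have hJJ : ideal_avoiding A J U J by split => //; split.
have [[Q hQ] hmax] : exists t, classical_sets.premaximal le t.
  apply: (classical_sets.ZL_preorder (exist _ J hJJ)).
  - by move=> t; apply/boolp.asboolP.
  - move=> r s t /boolp.asboolP hrs /boolp.asboolP hst.
    by apply/boolp.asboolP => y /hrs /hst.
  - move=> Ch htot; pose C X := exists t, Ch t /\ sval t = X.
    have hC : ideal_avoiding A J U (fun y => J y \/ exists X, C X /\ X y).
      apply: ideal_avoiding_chain_union => //.
        by move=> X [t [_ <-]]; apply: svalP.
      move=> X Y [s [Cs <-]] [t [Ct <-]].
      by case: (htot _ _ Cs Ct) => /boolp.asboolP; [left | right].
    exists (exist _ _ hC) => s Cs; apply/boolp.asboolP => y hy; right.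
    by exists (sval s); split => //; exists s.
exists Q; split => // X hX hQX.
by apply/boolp.asboolP; apply: (hmax (exist _ X hX)); apply/boolp.asboolP.
Qed.

Definition ideal_adjoin A Q c : K -> Prop :=
  fun y => exists q r, Q q /\ A r /\ y = q + c * r.

Lemma ideal_adjoin_ideal A Q c : is_subring A -> is_ideal A Q -> A c ->
  is_ideal A (ideal_adjoin A Q c).
Proof.
move=> hA hQ hc; split; last split; last split.
- move=> y [q [r [hq [hr ->]]]]; apply: subringD hA (ideal_sub hQ hq) (subringM hA hc hr).
- exists 0, 0; rewrite mulr0 addr0.
  by split; [apply: ideal0 hQ | split; [apply: subring0 hA|]].
- move=> y z [q1 [r1 [hq1 [hr1 ->]]]] [q2 [r2 [hq2 [hr2 ->]]]].
  exists (q1 - q2), (r1 - r2); split; first exact: idealB hQ hq1 hq2.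
  by split; [apply: subringB hA hr1 hr2 | ring].
- move=> a y ha [q [r [hq [hr ->]]]]; exists (a * q), (a * r).
  split; first exact: idealMl hQ ha hq.
  by split; [apply: subringM hA ha hr | ring].
Qed.

Section MaxIdealAvoiding.
Variables A J U Q : K -> Prop.
Hypotheses (hA : is_subring A) (hQ : max_ideal_avoiding A J U Q).

Lemma max_ideal_avoiding_adjoin c : A c -> ~ Q c ->
  exists u q r, U u /\ Q q /\ A r /\ u = q + c * r.
Proof.
case: hQ => [[hQI [hJQ hQU]] hmax] hc nc; apply: NNPP => hnone; apply: nc.
have hQc : forall y, Q y -> ideal_adjoin A Q c y.
  move=> y hy; exists y, 0; rewrite mulr0 addr0.
  by split => //; split; first exact: subring0 hA.
apply: (hmax (ideal_adjoin A Q c)) => //; last first.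
  exists 0, 1; rewrite mulr1 add0r.
  by split; [apply: ideal0 hQI | split; [apply: subring1 hA|]].
split; first exact: ideal_adjoin_ideal.
split; first by move=> y /hJQ /hQc.
by move=> u hu [q [r [hq [hr e]]]]; apply: hnone; exists u, q, r.
Qed.

Lemma max_ideal_avoiding_prime : U 1 -> (forall u v, U u -> U v -> U (u * v)) ->
  prime_ideal A Q.
Proof.
case: (hQ) => [[hQI [_ hQU]] _] hU1 hUM; split => //; split; first exact: hQU.
move=> a b ha hb hab; apply: NNPP => /not_or_and [na nb].
have [u1 [q1 [r1 [hu1 [hq1 [hr1 e1]]]]]] := max_ideal_avoiding_adjoin ha na.
have [u2 [q2 [r2 [hu2 [hq2 [hr2 e2]]]]]] := max_ideal_avoiding_adjoin hb nb.
apply: (hQU _ (hUM _ _ hu1 hu2)).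
have -> : u1 * u2 = u2 * q1 + (r1 * a) * q2 + (r1 * r2) * (a * b) by rewrite e1 e2; ring.
have hu2A : A u2 by rewrite e2; subring_closure hA; exact: ideal_sub hQI hq2.
by repeat apply: (idealD hQI); apply: (idealMl hQI) => //; subring_closure hA.
Qed.

End MaxIdealAvoiding.

Lemma monic_root_congr R S Q (f : {poly K}) y t u :
  is_subring R -> is_subring S -> (forall x, R x -> S x) -> is_ideal S Q ->
  f \is monic -> (forall i, R f`_i) -> root f t -> S t -> R y -> R u ->
  Q (u - y * t) -> exists r, R r /\ Q (u ^+ (size f).-1 + y * r).
Proof.
move=> hR hS hRS hQ fmon fR /rootP ft ht hy hu hut.
set n := (size f).-1.
have hn : size f = n.+1 by rewrite prednK // lt0n size_poly_eq0 monic_neq0.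
exists (\sum_(i < n) f`_i * y ^+ (n - i.+1) * u ^+ i); split.
  by apply: (subring_sum hR) => i; subring_closure hR.
have -> : u ^+ n + y * \sum_(i < n) f`_i * y ^+ (n - i.+1) * u ^+ i =
          \sum_(i < n.+1) f`_i * y ^+ (n - i) * u ^+ i.
  rewrite big_ord_recr /= subnn -lead_coefE (monicP fmon) mulr_sumr addrC.
  congr (_ + _); first by rewrite expr0 !mul1r.
  apply: eq_bigr => i _; rewrite -(subnSK (ltn_ord i)) exprS; ring.
have hyt : \sum_(i < n.+1) f`_i * y ^+ (n - i) * (y * t) ^+ i = 0.
  transitivity (y ^+ n * f.[t]); last by rewrite ft mulr0.
  rewrite horner_coef hn mulr_sumr; apply: eq_bigr => i _.
  have -> : y ^+ n = y ^+ (n - i) * y ^+ i by rewrite -exprD subnK // -ltnS.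
  by rewrite exprMn; ring.
rewrite -[X in Q X]subr0 -[X in _ - X]hyt -sumrB; apply: (ideal_sum hQ) => i.
rewrite -mulrBr; apply: idealMl hQ _ (idealXB _ hS hQ (hRS _ hu) _ hut).
  by apply: hRS; subring_closure hR.
by apply: subringM hS (hRS _ hy) ht.
Qed.

Lemma integral_going_up R S P1 p : is_subring R -> overring R S -> integral_over R S ->
  prime_ideal S P1 -> prime_ideal R p -> (forall y, contr R P1 y -> p y) ->
  exists Q, prime_ideal S Q /\ (forall y, P1 y -> Q y) /\ set_eq (contr R Q) p.
Proof.
move=> hR [hS hRS] hint hP1 hp hP1p.
pose U u := R u /\ ~ p u.
have hU1 : U 1 by split; [apply: subring1 hR | case: hp => _ []].
have hUM u v : U u -> U v -> U (u * v).
  move=> [hu nu] [hv nv]; split; first exact: subringM hR hu hv.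
  exact: prime_ideal_mul_notin hp hu hv nu nv.
have hP1U u : U u -> ~ P1 u by move=> [hu nu] hu1; apply/nu/hP1p.
have [Q hQ] := exists_max_ideal_avoiding hP1.1 hP1U.
have hQprime := max_ideal_avoiding_prime hS hQ hU1 hUM.
have [[hQI [hP1Q hQU]] _] := hQ.
have hQp y : contr R Q y -> p y by move=> [hy hyR]; apply: NNPP => ny; apply: hQU hy.
exists Q; split => //; split => // y; split; first exact: hQp.
move=> hy; have hyR := ideal_sub hp.1 hy; split => //; apply: NNPP => ny.
have [u [q [t [[huR nu] [hq [ht e]]]]]] := max_ideal_avoiding_adjoin hS hQ (hRS _ hyR) ny.
have [f [fmon [fR froot]]] := hint t ht.
have hut : Q (u - y * t) by rewrite e addrK.
have [r [hr hun]] := monic_root_congr hR hS hRS hQI fmon fR froot ht hyR huR hut.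
apply: nu; apply: (prime_idealX (n := (size f).-1) hR hp huR).
rewrite -[u ^+ _](addrK (y * r)); apply: idealB hp.1 _ (idealMr hp.1 hr hy).
by apply: hQp; split => //; subring_closure hR.
Qed.

Definition ext_ideal S Q P : K -> Prop :=
  fun z => exists a u, P a /\ (S u /\ ~ Q u) /\ z = a / u.

Section LocAt.
Variables S Q : K -> Prop.
Hypotheses (hS : is_subring S) (hQ : prime_ideal S Q).

Let hS1 : S 1 /\ ~ Q 1. Proof. by split; [apply: subring1 hS | case: hQ => _ []]. Qed.

Let hSQM u v : S u -> S v -> ~ Q u -> ~ Q v -> S (u * v) /\ ~ Q (u * v).
Proof.
move=> hu hv nu nv; split; first exact: subringM hS hu hv.
exact: prime_ideal_mul_notin hQ hu hv nu nv.
Qed.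

Lemma loc_at_sub x : S x -> loc_at S Q x.
Proof. by move=> hx; exists x, 1; rewrite divr1. Qed.

Lemma loc_at_subring : is_subring (loc_at S Q).
Proof.
split; first exact/loc_at_sub/(subring1 hS).
split=> _ _ [a [u [ha [[hu nu] ->]]]] [b [v [hb [[hv nv] ->]]]].
all: have u0 := prime_ideal_neq0 hQ nu; have v0 := prime_ideal_neq0 hQ nv.
- exists (a * v - b * u), (u * v); split; first by subring_closure hS.
  by split; [apply: hSQM | field; rewrite u0 v0].
- exists (a * b), (u * v); split; first exact: subringM hS ha hb.
  by split; [apply: hSQM | field; rewrite u0 v0].
Qed.

Lemma loc_at_inv u : S u -> ~ Q u -> loc_at S Q u^-1.
Proof. by move=> hu nu; exists 1, u; rewrite div1r; split; [apply: subring1 hS | split]. Qed.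

Lemma ext_ideal_contr P : prime_ideal S P -> (forall y, P y -> Q y) ->
  set_eq (contr S (ext_ideal S Q P)) P.
Proof.
move=> [hPI [_ hPp]] hPQ z; split.
- move=> [[a [u [ha [[hu nu] e]]]] hz].
  have hza : z * u = a by rewrite e mulfVK // (prime_ideal_neq0 hQ nu).
  by rewrite -hza in ha; case: (hPp _ _ hz hu ha) => // /hPQ.
- move=> hz; split; last exact: ideal_sub hPI hz.
  by exists z, 1; rewrite divr1.
Qed.

Lemma ext_ideal_prime P : prime_ideal S P -> (forall y, P y -> Q y) ->
  prime_ideal (loc_at S Q) (ext_ideal S Q P).
Proof.
move=> [hPI [_ hPp]] hPQ.
split; last split.
- split; last split; last split.
  + move=> _ [a [u [ha [hu ->]]]]; exists a, u; split => //; exact: ideal_sub hPI ha.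
  + by exists 0, 1; rewrite mul0r; split; first exact: ideal0 hPI.
  + move=> _ _ [a [u [ha [[hu nu] ->]]]] [b [v [hb [[hv nv] ->]]]].
    have u0 := prime_ideal_neq0 hQ nu; have v0 := prime_ideal_neq0 hQ nv.
    exists (a * v - b * u), (u * v); split.
      by apply: idealB hPI (idealMr hPI hv ha) (idealMr hPI hu hb).
    by split; [apply: hSQM | field; rewrite u0 v0].
  + move=> _ _ [b [v [hb [[hv nv] ->]]]] [a [u [ha [[hu nu] ->]]]].
    exists (b * a), (v * u); split; first exact: idealMl hPI hb ha.
    by split; [apply: hSQM | rewrite invfM mulrACA].
- move=> [a [u [ha [[hu nu] e]]]]; have u0 := prime_ideal_neq0 hQ nu.
  have ua : u = a by rewrite -(divfK u0 a) -e mul1r.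
  by apply: nu; apply: hPQ; rewrite ua.
- move=> _ _ [b1 [v1 [hb1 [[hv1 nv1] ->]]]] [b2 [v2 [hb2 [[hv2 nv2] ->]]]].
  move=> [a [u [ha [[hu nu] e]]]].
  have v10 := prime_ideal_neq0 hQ nv1; have v20 := prime_ideal_neq0 hQ nv2.
  have e2 : b1 * b2 * u = a * (v1 * v2).
    have u0 := prime_ideal_neq0 hQ nu.
    by rewrite -[a](divfK u0) -e; field; rewrite v10 v20.
  have hb12u : P (b1 * b2 * u).
    by rewrite e2; apply: idealMr hPI (subringM hS hv1 hv2) ha.
  case: (hPp _ _ (subringM hS hb1 hb2) hu hb12u) => [|/hPQ //].
  by case/(hPp _ _ hb1 hb2) => hb; [left; exists b1, v1 | right; exists b2, v2].
Qed.

Lemma loc_at_unit z : loc_at S Q z -> ~ ext_ideal S Q Q z -> z != 0 /\ loc_at S Q z^-1.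
Proof.
move=> [b [v [hb [[hv nv] e]]]] nz.
have nb : ~ Q b by move=> qb; apply: nz; exists b, v.
have b0 := prime_ideal_neq0 hQ nb; have v0 := prime_ideal_neq0 hQ nv.
split; first by rewrite e mulf_neq0 // invr_neq0.
by exists v, b; rewrite e invfM invrK mulrC.
Qed.

Lemma loc_at_local : local_ring (loc_at S Q).
Proof.
have [hMI [hM1 _]] := ext_ideal_prime hQ (fun y hy => hy).
have unit1 J : is_ideal (loc_at S Q) J -> forall z, J z -> ~ ext_ideal S Q Q z -> J 1.
  move=> hJ z hz nz; have [z0 hzi] := loc_at_unit (ideal_sub hJ hz) nz.
  by rewrite -(mulVf z0); apply: idealMl hJ hzi hz.
have hNM N : is_ideal (loc_at S Q) N -> ~ N 1 -> forall y, N y -> ext_ideal S Q Q y.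
  by move=> hN hN1 y hy; apply: NNPP => ny; apply/hN1/(unit1 _ hN y hy ny).
exists (ext_ideal S Q Q); split.
- split => //; split => // J hJ hMJ.
  have [hJM | nJM] := classic (forall y, J y -> ext_ideal S Q Q y).
    by left => y; split; [apply: hJM | apply: hMJ].
  by right; apply: NNPP => nJ1; apply/nJM/(hNM _ hJ nJ1).
- move=> N [hN [hN1 hNmax]].
  have [eNM | /hM1 //] := hNmax _ hMI (hNM _ hN hN1).
  by move=> y; split; [apply: hNM | move/eNM].
Qed.

End LocAt.

Lemma loc_at_prime_contr_sub S Q Q' : is_subring S -> prime_ideal S Q ->
  prime_ideal (loc_at S Q) Q' -> forall y, contr S Q' y -> Q y.
Proof.
move=> hS hQ [hQ'I [hQ'1 _]] y [hy hyS]; apply: NNPP => ny; apply: hQ'1.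
rewrite -(mulVf (prime_ideal_neq0 hQ ny)); exact: idealMl hQ'I (loc_at_inv hS hyS ny) hy.
Qed.

Lemma integral_loc_at_going_down R S Q : is_subring R -> overring R S ->
  integral_over R S -> spec_bijective R S -> prime_ideal S Q ->
  going_down R (loc_at S Q).
Proof.
move=> hR hRS hint [hlo hinj] hQ p q Q' hp hq hpq hQ' hQ'q.
have [hS hRS'] := hRS.
have hST : forall x, S x -> loc_at S Q x := loc_at_sub hS hQ.
have hQ'S := prime_ideal_contr hS hST hQ'.
have hQ'Sq : set_eq (contr R (contr S Q')) q.
  move=> y; rewrite -hQ'q; split; first by move=> [[]].
  by move=> [hy hyR]; do !split => //; apply: hRS'.
have [P0 [hP0 hP0p]] := hlo p hp.
have [Q3 [hQ3 [hP0Q3 hQ3q]]] : exists Q3, prime_ideal S Q3 /\ (forall y, P0 y -> Q3 y) /\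
    set_eq (contr R Q3) q.
  by apply: integral_going_up hR hRS hint hP0 hq _ => y /hP0p /hpq.
have eQ3 : set_eq Q3 (contr S Q') by apply: hinj => // y; rewrite hQ3q hQ'Sq.
have hP0Q y : P0 y -> Q y.
  by move=> /hP0Q3 /eQ3; apply: (loc_at_prime_contr_sub hS hQ hQ').
exists (ext_ideal S Q P0); split; first exact: ext_ideal_prime.
split.
- move=> _ [a [u [ha [[hu nu] ->]]]]; rewrite mulrC.
  by apply: idealMl hQ'.1 (loc_at_inv hS hu nu) _; case/eQ3: (hP0Q3 _ ha).
- move=> y; have eP0 := ext_ideal_contr hS hQ hP0 hP0Q y; split.
  + by move=> [hy hyR]; apply/hP0p; split => //; apply/eP0; split => //; apply: hRS'.
  + by move=> /hP0p [hy hyR]; split => //; case/eP0: hy.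
Qed.

Lemma loc_at_localization_notin R S Q U : is_subring R -> prime_ideal S Q ->
  mult_set R U -> set_eq (loc_at S Q) (localization R U) -> forall u, U u -> ~ Q u.
Proof.
move=> hR hQ [_ [_ [hU0 _]]] hTU u hu qu.
have u0 : u != 0 by apply: contraPneq hU0 => <-.
have [b [v [hb [[hv nv] e]]]] : loc_at S Q u^-1.
  by apply/hTU; exists 1, u; rewrite div1r; split; first exact: subring1 hR.
have v0 := prime_ideal_neq0 hQ nv.
have vbu : v = b * u by rewrite -(divfK v0 b) -e mulrAC mulVf // mul1r.
by apply: nv; rewrite vbu; apply: idealMl hQ.1 hb qu.
Qed.

Definition colon_ideal R x : K -> Prop := fun r => R r /\ R (r * x).

Lemma colon_ideal_ideal R x : is_subring R -> is_ideal R (colon_ideal R x).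
Proof.
move=> hR; split; last split; last split.
- by move=> r [].
- by rewrite /colon_ideal mul0r; split; apply: subring0 hR.
- move=> r s [hr hrx] [hs hsx]; split; first exact: subringB hR hr hs.
  by rewrite mulrBl; apply: subringB hR hrx hsx.
- move=> a r ha [hr hrx]; split; first exact: subringM hR ha hr.
  by rewrite -mulrA; apply: subringM hR ha hrx.
Qed.

Lemma perinormal_integral_sub R S : is_subring R -> perinormal R -> overring R S ->
  integral_over R S -> spec_bijective R S -> forall x, S x -> R x.
Proof.
move=> hR hper hRS hint hspec x hx; apply: NNPP => nx.
have [m hm] : exists m, max_ideal_avoiding R (colon_ideal R x) (fun u : K => u = 1) m.
  by apply: exists_max_ideal_avoiding (colon_ideal_ideal x hR) _ => _ -> [_]; rewrite mul1r.
have hmp : prime_ideal R m.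
  by apply: max_ideal_avoiding_prime hR hm _ _ => // u v -> ->; rewrite mulr1.
have [Q [hQ hQm]] := hspec.1 m hmp.
have [hS hRS'] := hRS.
have hRT : overring R (loc_at S Q).
  by split; [apply: loc_at_subring hS hQ | move=> y /hRS' /(loc_at_sub hS hQ)].
have [U [hU hTU]] := hper _ hRT (loc_at_local hS hQ)
  (integral_loc_at_going_down hR hRS hint hspec hQ).
have [a [u [ha [hu e]]]] := (hTU x).1 (loc_at_sub hS hQ hx).
apply: (loc_at_localization_notin hR hQ hU hTU hu).
have u0 : u != 0 by apply: contraPneq hU.2.2.1 => <-.
have hmu : m u by apply: hm.1.2.1; split; [apply: hU.1 | rewrite e mulrC divfK].
by case/hQm: hmu.
Qed.

Lemma integral_quadratic R s c1 c0 : is_subring R -> R c1 -> R c0 ->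
  s ^+ 2 + c1 * s + c0 = 0 ->
  exists f : {poly K}, f \is monic /\ (forall i, R f`_i) /\ root f s.
Proof.
move=> hR hc1 hc0 hs; exists (Poly [:: c0; c1; 1]); split; last split.
- by rewrite monicE lead_coefE (PolyK (c := 0)) ?oner_neq0.
- move=> i; rewrite coef_Poly; case: i => [|[|[|i]]] //=.
    exact: subring1 hR.
  by rewrite nth_nil; apply: subring0 hR.
- by apply/rootP; rewrite horner_Poly /= -[RHS]hs; ring.
Qed.

Section AdjoinRoot.
Variables (R : K -> Prop) (x : K).
Hypotheses (hR : is_subring R) (hx2 : R (x ^+ 2)) (hx3 : R (x ^+ 3)).

Definition adjoin : K -> Prop := fun s => exists a b, R a /\ R b /\ s = a + b * x.

Lemma adjoin_subring : is_subring adjoin.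
Proof.
split.
  exists 1, 0; rewrite mul0r addr0.
  by split; [apply: subring1 hR | split; [apply: subring0 hR|]].
split=> _ _ [a [b [ha [hb ->]]]] [c [d [hc [hd ->]]]].
- exists (a - c), (b - d).
  by split; [|split]; [subring_closure hR | subring_closure hR | ring].
- exists (a * c + b * d * x ^+ 2), (a * d + b * c).
  by split; [|split]; [subring_closure hR | subring_closure hR | ring].
Qed.

Lemma adjoin_sub r : R r -> adjoin r.
Proof. by move=> hr; exists r, 0; rewrite mul0r addr0; do !split => //; apply: subring0 hR. Qed.

Lemma adjoin_gen : adjoin x.
Proof.
exists 0, 1; rewrite mul1r add0r.
by split; [apply: subring0 hR | split; [apply: subring1 hR|]].
Qed.

Lemma adjoin_mulX2 s : adjoin s -> R (x ^+ 2 * s).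
Proof.
move=> [a [b [ha [hb ->]]]].
have -> : x ^+ 2 * (a + b * x) = a * x ^+ 2 + b * x ^+ 3 by ring.
by subring_closure hR.
Qed.

Lemma adjoin_mulX3 s : adjoin s -> R (x ^+ 3 * s).
Proof.
move=> [a [b [ha [hb ->]]]].
have -> : x ^+ 3 * (a + b * x) = a * x ^+ 3 + b * (x ^+ 2 * x ^+ 2) by ring.
by subring_closure hR.
Qed.

Lemma adjoin_integral : integral_over R adjoin.
Proof.
move=> _ [a [b [ha [hb ->]]]].
apply: (integral_quadratic (c1 := - (a + a)) (c0 := a ^+ 2 - b ^+ 2 * x ^+ 2) hR).
- by subring_closure hR.
- by subring_closure hR.
- by ring.
Qed.

Section PrimeOver.
Variable p : K -> Prop.
Hypothesis hp : prime_ideal R p.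

Definition prime_over_sq_in : K -> Prop := fun s => exists a b, p a /\ R b /\ s = a + b * x.

Definition prime_over_sq_notin : K -> Prop := fun s => adjoin s /\ p (x ^+ 2 * s).

Lemma prime_over_sq_in_prime : p (x ^+ 2) ->
  prime_ideal adjoin prime_over_sq_in /\ set_eq (contr R prime_over_sq_in) p.
Proof.
move=> px2; have [hpI [hp1 hpp]] := hp.
have hbx b : R b -> p ((b * x) ^+ 2).
  by move=> hb; rewrite exprMn; apply: idealMl hpI (subringX _ hR hb) px2.
have hpR r a b : p a -> R b -> R r -> r = a + b * x -> p r.
  move=> ha hb hr e; have haR := ideal_sub hpI ha.
  have hbxR : R (b * x).
    by rewrite [b * x](_ : _ = r - a); [subring_closure hR | rewrite e; ring].
  by rewrite e; apply: idealD hpI ha (prime_idealX hR hp hbxR (hbx b hb)).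
split; last first.
  move=> r; split; first by move=> [[a [b [ha [hb e]]]] hr]; apply: hpR ha hb hr e.
  move=> hr; split; last exact: ideal_sub hpI hr.
  by exists r, 0; rewrite mul0r addr0; do !split => //; apply: subring0 hR.
split; last split.
- split; last split; last split.
  + move=> _ [a [b [ha [hb ->]]]]; exists a, b; split => //; exact: ideal_sub hpI ha.
  + exists 0, 0; rewrite mul0r addr0.
    by split; [apply: ideal0 hpI | split; [apply: subring0 hR|]].
  + move=> _ _ [a [b [ha [hb ->]]]] [c [d [hc [hd ->]]]].
    exists (a - c), (b - d); split; first exact: idealB hpI ha hc.
    by split; [subring_closure hR | ring].
  + move=> _ _ [c [d [hc [hd ->]]]] [a [b [ha [hb ->]]]].
    exists (c * a + d * b * x ^+ 2), (c * b + d * a); split.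
      by apply: idealD hpI (idealMl hpI hc ha) (idealMl hpI (subringM hR hd hb) px2).
    have haR := ideal_sub hpI ha.
    by split; [subring_closure hR | ring].
- by move=> [a [b [ha [hb e]]]]; apply/hp1/(hpR 1 a b ha hb (subring1 hR) e).
- move=> _ _ [a [b [ha [hb ->]]]] [c [d [hc [hd ->]]]] [e [f [he [hf E]]]].
  have heR := ideal_sub hpI he.
  pose w := (a * c + b * d * x ^+ 2) - e.
  have hw : w = (f - (a * d + b * c)) * x by rewrite /w -[e](addrK (f * x)) -E; ring.
  have pw : p w.
    apply: (hpR w 0 (f - (a * d + b * c))) => //; first exact: ideal0 hpI.
    - by subring_closure hR.
    - by rewrite /w; subring_closure hR.
    - by rewrite add0r.
  have pac : p (a * c).
    have -> : a * c = e + w - b * d * x ^+ 2 by rewrite /w; ring.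
    by apply: idealB hpI (idealD hpI he pw) (idealMl hpI (subringM hR hb hd) px2).
  by case: (hpp _ _ ha hc pac) => h; [left; exists a, b | right; exists c, d].
Qed.

Lemma prime_over_sq_notin_prime : ~ p (x ^+ 2) ->
  prime_ideal adjoin prime_over_sq_notin /\ set_eq (contr R prime_over_sq_notin) p.
Proof.
move=> npx2; have [hpI [_ hpp]] := hp.
have hS := adjoin_subring.
split; last first.
  move=> r; split; first by move=> [[_ /(hpp _ _ hx2) hr] /hr []].
  move=> hr; have hrR := ideal_sub hpI hr.
  by split => //; split; [apply: adjoin_sub | apply: idealMl hpI hx2 hr].
split; last split.
- split; last split; last split.
  + by move=> s [].
  + by split; [apply: subring0 hS | rewrite mulr0; apply: ideal0 hpI].
  + move=> s t [hs ps] [ht pt]; split; first exact: subringB hS hs ht.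
    by rewrite mulrBr; apply: idealB hpI ps pt.
  + move=> t s ht [hs ps]; split; first exact: subringM hS ht hs.
    have px3 : p (x ^+ 3 * s).
      have : p (x ^+ 2 * (x ^+ 3 * s)).
        by rewrite mulrCA; apply: idealMl hpI hx3 ps.
      by case/(hpp _ _ hx2 (adjoin_mulX3 hs)).
    case: ht => [c [d [hc [hd ->]]]].
    have -> : x ^+ 2 * ((c + d * x) * s) = c * (x ^+ 2 * s) + d * (x ^+ 3 * s) by ring.
    by apply: idealD hpI (idealMl hpI hc ps) (idealMl hpI hd px3).
- by move=> [_]; rewrite mulr1.
- move=> s t hs ht [_ pst].
  have : p ((x ^+ 2 * s) * (x ^+ 2 * t)).
    by rewrite mulrACA -mulrA; apply: idealMl hpI hx2 pst.
  by case/(hpp _ _ (adjoin_mulX2 hs) (adjoin_mulX2 ht)); [left | right].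
Qed.

Section UniquePrimeOver.
Variable P : K -> Prop.
Hypotheses (hP : prime_ideal adjoin P) (hPp : set_eq (contr R P) p).

Lemma prime_over_sq_in_uniq : p (x ^+ 2) -> set_eq P prime_over_sq_in.
Proof.
move=> px2; have hPI := hP.1.
have Px : P x.
  have [Px2 _] := (hPp _).2 px2.
  exact: prime_idealX adjoin_subring hP adjoin_gen Px2.
have Pbx b : R b -> P (b * x) by move=> hb; apply: idealMl hPI (adjoin_sub hb) Px.
move=> s; split.
- move=> Ps; have [a [b [ha [hb e]]]] := ideal_sub hPI Ps.
  exists a, b; split => //; apply/hPp; split => //.
  by rewrite (_ : a = s - b * x); [apply: idealB hPI Ps (Pbx b hb) | rewrite e addrK].
- move=> [a [b [pa [hb ->]]]]; apply: idealD hPI _ (Pbx b hb).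
  by case/hPp: pa.
Qed.

Lemma prime_over_sq_notin_uniq : ~ p (x ^+ 2) -> set_eq P prime_over_sq_notin.
Proof.
move=> npx2; have [hPI [_ hPprime]] := hP.
move=> s; split.
- move=> Ps; have hs := ideal_sub hPI Ps; split => //.
  by apply/hPp; split; [apply: idealMl hPI (adjoin_sub hx2) Ps | apply: adjoin_mulX2].
- move=> [hs /hPp [Px2s _]].
  by case: (hPprime _ _ (adjoin_sub hx2) hs Px2s) => // Px2; case: npx2; apply/hPp.
Qed.

End UniquePrimeOver.
End PrimeOver.

Lemma adjoin_spec_bijective : spec_bijective R adjoin.
Proof.
split.
- move=> p hp; have [px2 | npx2] := classic (p (x ^+ 2)).
  + by exists (prime_over_sq_in p); apply: prime_over_sq_in_prime.
  + by exists (prime_over_sq_notin p); apply: prime_over_sq_notin_prime.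
- move=> P1 P2 hP1 hP2 e12.
  have e1 : set_eq (contr R P1) (contr R P1) by [].
  have e2 : set_eq (contr R P2) (contr R P1) by move=> y; rewrite e12.
  have [px2 | npx2] := classic (contr R P1 (x ^+ 2)) => s.
  + by rewrite (prime_over_sq_in_uniq hP1 e1 px2) (prime_over_sq_in_uniq hP2 e2 px2).
  + rewrite (prime_over_sq_notin_uniq hP1 e1 npx2).
    by rewrite (prime_over_sq_notin_uniq hP2 e2 npx2).
Qed.

End AdjoinRoot.

Lemma perinormal_weakly_normal R : is_subring R -> perinormal R -> weakly_normal R.
Proof.
move=> hR hper S hRS hint hspec _ y; split.
  exact: perinormal_integral_sub hR hper hRS hint hspec y.
by case: hRS => _; apply.
Qed.

Lemma perinormal_seminormal R : is_subring R -> perinormal R -> seminormal R.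
Proof.
move=> hR hper x hx2 hx3.
have hRS : overring R (adjoin R x) by split; [apply: adjoin_subring | apply: adjoin_sub].
apply: (perinormal_integral_sub hR hper hRS); last exact: adjoin_gen.
- exact: adjoin_integral.
- exact: adjoin_spec_bijective.
Qed.

End Perinormal.

Theorem corollary3p4 (K : fieldType) (R : K -> Prop) :
  is_subring R -> is_frac_field R -> perinormal R ->
  weakly_normal R /\ seminormal R.
Proof.
move=> hR _ hper; split; [exact: perinormal_weakly_normal | exact: perinormal_seminormal].
Qed.
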